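(* Let $R$ be a unital ring, let $S\subseteq R$ be a subring with $1\in S$, and let $m,n\in\mathbb{N}$. (1) If $1\in\Sigma^m\big(S\cdot\big[[S,S]_1,[S,S]_1\big]_1\big)$, then $R=\Sigma^m\big([R,R]_1+[R,R]_1\cdot[R,R]_1\big)$. In particular, if there exist $a\in S$ and $u,v\in[S,S]_1$ with $1=a[u,v]$, then $R=[R,R]_1+[R,R]_1\cdot[R,R]_1$. (2) If $1\in\Sigma^n\big(S\cdot\big[[S,S]_1,[S,S]_1^{\cdot 2}\big]_1\big)$, then $\xi(R)\leq 3n$. In particular, if there exist $a\in S$ and $u,v,w\in[S,S]_1$ with $1=a[u,vw]$, then $\xi(R)\leq 3$.
   Context: $[x,y]=xy-yx$. For subsets $X,Y$ of a ring: $[X,Y]_1=\{[x,y]:x\in X,y\in Y\}$; $X\cdot Y=\{xy:x\in X,y\in Y\}$, $X^{\cdot 2}=X\cdot X$; $X+Y=\{x+y\}$; $\Sigma^k X=\{x_1+\dots+x_k:x_i\in X\}$. For a unital ring $T$ generated by its commutators, $\xi(T)$ is the minimal $N$ such that $T=\Sigma^N\big([T,T]_1\cdot[T,T]_1\big)$, i.e. every element is a sum of $N$ elements $[b,c][d,e]$. *)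

From mathcomp Require Import all_boot all_order all_algebra.
Set Implicit Arguments. Unset Strict Implicit. Unset Printing Implicit Defensive.
Import GRing.Theory.
Local Open Scope ring_scope.

Definition comm (R : pzRingType) (x y : R) : R := x * y - y * x.

Definition comm1 (R : pzRingType) (X Y : R -> Prop) : R -> Prop :=
  fun z => exists x y, [/\ X x, Y y & z = comm x y].

Definition mulset (R : pzRingType) (X Y : R -> Prop) : R -> Prop :=
  fun z => exists x y, [/\ X x, Y y & z = x * y].

Definition sqset (R : pzRingType) (X : R -> Prop) : R -> Prop := mulset X X.

Definition addset (R : pzRingType) (X Y : R -> Prop) : R -> Prop :=
  fun z => exists x y, [/\ X x, Y y & z = x + y].

Definition sigma (R : pzRingType) (k : nat) (X : R -> Prop) : R -> Prop :=
  fun z => exists f : 'I_k -> R, (forall i, X (f i)) /\ z = \sum_(i < k) f i.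

Definition full (R : pzRingType) : R -> Prop := fun _ => True.

Definition commR (R : pzRingType) : R -> Prop := comm1 (@full R) (@full R).

(* xi(T) <= N : T is generated by commutators and the minimal N0 with
   T = Sigma^N0([T,T]_1 . [T,T]_1) exists and is at most N. *)
Definition xi_le (R : pzRingType) (N : nat) : Prop :=
  exists N0, (N0 <= N)%N /\ forall x : R, sigma N0 (mulset (@commR R) (@commR R)) x.

(* Everything rests on the two Leibniz rules for the commutator,
   [xy,z] = x[y,z] + [x,z]y and [x,yz] = [x,y]z + y[x,z].  The first gives
   y[u,v] = [yu,v] + [v,y]u, so when u is a commutator every left multiple of
   [u,v] lies in [R,R]_1 + [R,R]_1.[R,R]_1; combined with the second it gives
   y[u,vw] = [yu,v]w + v[yu,w] + [vw,y]u, a sum of three products of two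
   commutators when u, v, w are commutators.  Writing x = x.1 and expanding 1
   as the assumed sum of n such elements yields the bounds. *)

From mathcomp Require Import all_boot all_order all_algebra.
Set Implicit Arguments. Unset Strict Implicit. Unset Printing Implicit Defensive.
Import GRing.Theory.
Local Open Scope ring_scope.

Section Sums.
Variable R : pzRingType.
Implicit Types (P Q : R -> Prop) (x y z : R).

Lemma sigma0 Q : sigma 0 Q 0.
Proof. by exists (fun _ => 0); split; [case | rewrite big_ord0]. Qed.

Lemma sigma1 Q x : Q x -> sigma 1 Q x.
Proof. by move=> Qx; exists (fun _ => x); split; last rewrite big_ord1. Qed.

Lemma sigmaD Q a b x y : sigma a Q x -> sigma b Q y -> sigma (a + b) Q (x + y).
Proof.
move=> [f [Qf ->]] [g [Qg ->]].
exists (fun i => match split i with inl j => f j | inr j => g j end); split.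
  by move=> i; case: (split i).
rewrite big_split_ord; congr (_ + _); apply: eq_bigr => i _.
  by rewrite (unsplitK (inl i)).
by rewrite (unsplitK (inr i)).
Qed.

Lemma sigma_lmul P Q k m z :
  (forall x p, P p -> sigma k Q (x * p)) ->
  sigma m P z -> forall x, sigma (k * m) Q (x * z).
Proof.
move=> PQ; elim: m z => [|m IHm] z [f [Pf ->]] x.
  by rewrite big_ord0 mulr0 muln0; apply: sigma0.
rewrite big_ord_recl mulrDr mulnS; apply: sigmaD; first exact: PQ.
by apply: IHm; exists (fun i => f (lift ord0 i)).
Qed.

End Sums.

Section Commutators.
Variable R : pzRingType.
Implicit Types (U V W : R -> Prop) (x y z u v w : R).

Lemma commMl x y z : comm (x * y) z = x * comm y z + comm x z * y.
Proof. by rewrite /comm mulrBr mulrBl !mulrA addrA subrK. Qed.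

Lemma commMr x y z : comm x (y * z) = comm x y * z + y * comm x z.
Proof. by rewrite /comm mulrBr mulrBl !mulrA addrA subrK. Qed.

Lemma commN x y : comm x y = - comm y x.
Proof. by rewrite /comm opprB. Qed.

Lemma mulr_comm y u v : y * comm u v = comm (y * u) v + comm v y * u.
Proof. by rewrite commMl (commN v) mulNr addrK. Qed.

Lemma commR_comm x y : commR (comm x y).
Proof. by exists x, y. Qed.

Lemma commR_comm1 U V u : comm1 U V u -> commR u.
Proof. by move=> [s [t [_ _ ->]]]; apply: commR_comm. Qed.

Lemma commR_mul_comm x u v :
  commR u -> mulset (@commR R) (@commR R) (comm v x * u).
Proof. by move=> Ru; exists (comm v x), u; split=> //; apply: commR_comm. Qed.

Lemma lmul_comm_of_commR y u v :
  commR u -> addset (@commR R) (mulset (@commR R) (@commR R)) (y * comm u v).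
Proof.
move=> Ru; exists (comm (y * u) v), (comm v y * u); split.
- exact: commR_comm.
- exact: commR_mul_comm.
- exact: mulr_comm.
Qed.

Lemma lmul_comm_mul_of_commR y u v w :
  commR u -> commR v -> commR w ->
  sigma 3 (mulset (@commR R) (@commR R)) (y * comm u (v * w)).
Proof.
move=> Ru Rv Rw; rewrite mulr_comm commMr.
apply: (@sigmaD _ _ 2 1); last exact/sigma1/commR_mul_comm.
apply: (@sigmaD _ _ 1 1); apply: sigma1.
  by exists (comm (y * u) v), w; split=> //; apply: commR_comm.
by exists v, (comm (y * u) w); split=> //; apply: commR_comm.
Qed.

Lemma lmul_mulset_comm1 W U V :
  (forall u, U u -> commR u) ->
  forall x p, mulset W (comm1 U V) p ->
  addset (@commR R) (mulset (@commR R) (@commR R)) (x * p).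
Proof.
move=> UR x _ [a [c [_ [u [v [Uu _ ->]]] ->]]].
by rewrite mulrA; apply/lmul_comm_of_commR/UR.
Qed.

Lemma lmul_mulset_comm1_sq W U V :
  (forall u, U u -> commR u) -> (forall v, V v -> commR v) ->
  forall x p, mulset W (comm1 U (sqset V)) p ->
  sigma 3 (mulset (@commR R) (@commR R)) (x * p).
Proof.
move=> UR VR x _ [a [c [_ [u [vw [Uu [v [w [Vv Vw ->]]] ->]]] ->]]].
by rewrite mulrA; apply: lmul_comm_mul_of_commR; auto.
Qed.

End Commutators.

Theorem lemma5p13 (R : pzRingType) (S : {pred R}) (HS : GRing.subring_closed S) :
  let Sp : R -> Prop := fun x => x \in S in
  let CS := comm1 Sp Sp in
  (* (1) *)
  (forall m : nat,
     sigma m (mulset Sp (comm1 CS CS)) 1 ->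
     forall x : R, sigma m (addset (@commR R) (mulset (@commR R) (@commR R))) x)
  /\
  ((exists a u v, [/\ Sp a, CS u, CS v & 1 = a * comm u v]) ->
     forall x : R, addset (@commR R) (mulset (@commR R) (@commR R)) x)
  /\
  (* (2) *)
  (forall n : nat,
     sigma n (mulset Sp (comm1 CS (sqset CS))) 1 -> xi_le R (3 * n))
  /\
  ((exists a u v w, [/\ Sp a, CS u, CS v, CS w & 1 = a * comm u (v * w)]) ->
     xi_le R 3).
Proof.
move=> Sp CS.
have CS_commR u : CS u -> commR u by apply: commR_comm1.
split; [|split; [|split]].
- move=> m one_sum x; rewrite -[x]mulr1 -[m]mul1n.
  apply: sigma_lmul one_sum x => y p Pp.
  exact: sigma1 (lmul_mulset_comm1 CS_commR y Pp).
- move=> [a [u [v [_ CSu _ one_eq]]]] x.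
  by rewrite -[x]mulr1 one_eq mulrA; apply/lmul_comm_of_commR/CS_commR.
- move=> n one_sum; exists (3 * n)%N; split=> // x; rewrite -[x]mulr1.
  exact: sigma_lmul (lmul_mulset_comm1_sq CS_commR CS_commR) one_sum x.
- move=> [a [u [v [w [_ CSu CSv CSw one_eq]]]]]; exists 3%N; split=> // x.
  by rewrite -[x]mulr1 one_eq mulrA; apply: lmul_comm_mul_of_commR; auto.
Qed.
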